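(* Let $Q$ be a state of a medium, and let $G$ be the directed graph whose vertices are the states of the medium, with an arc from $S$ to $S'$ whenever $St=S'\neq S$ for some token $t$ belonging to the content $\hat Q$ of $Q$. Then $Q$ is the unique sink of $G$.
   Context: A medium consists of a finite set of states and a set of tokens, each token $t$ acting as a function on states, written $S\mapsto St$. Tokens concatenate into messages (words); $Sw$ denotes the state obtained by applying the tokens of $w$ successively to $S$. A token $t$ has a reverse $\tilde t$ if for any two distinct states $S\neq Q$, $St=Q$ iff $Q\tilde t=S$. A message is inconsistent if it contains some token together with its reverse, and consistent otherwise. A message $w$ is vacuous if for each token $t$ it contains equally many copies of $t$ and $\tilde t$. A token $t$ is effective for $S$ if $St\neq S$; a message is stepwise effective for $S$ if each successive token is effective for the state it is applied to. The axioms of a medium are: (1) each token has a unique reverse; (2) for any two distinct states $S,Q$ there is a consistent message $w$ with $Sw=Q$; (3) if $w$ is stepwise effective for $S$, then $Sw=S$ iff $w$ is vacuous; (4) if $Sw=Qz$, $w$ is stepwise effective for $S$, $z$ is stepwise effective for $Q$, and both $w,z$ are consistent, then $wz$ is consistent. A straight path from $S$ to $Sw$ is a consistent message $w$ that is stepwise effective for $S$. The content $\hat Q$ of a state $Q$ is the set of all tokens occurring in messages $w$ such that $Sw=Q$ is a straight path for some state $S$. (For every token $t$, exactly one of $t,\tilde t$ belongs to $\hat Q$, so $\hat Q$ and its complement form an orientation, the content orientation of $Q$.) *)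

From mathcomp Require Import all_boot.
Set Implicit Arguments. Unset Strict Implicit. Unset Printing Implicit Defensive.

Section Medium.
Variables (St Tok : finType) (act : St -> Tok -> St).

Definition apply_msg (S : St) (w : seq Tok) : St := foldl act S w.

Definition is_reverse (t u : Tok) : Prop :=
  forall S Q : St, S <> Q -> (act S t = Q <-> act Q u = S).

Definition inconsistent (w : seq Tok) : Prop :=
  exists t u, [/\ is_reverse t u, t \in w & u \in w].
Definition consistent (w : seq Tok) : Prop := ~ inconsistent w.

Definition vacuous (w : seq Tok) : Prop :=
  forall t u, is_reverse t u -> count_mem t w = count_mem u w.

Definition effective (S : St) (t : Tok) : Prop := act S t <> S.

Fixpoint stepwise_effective (S : St) (w : seq Tok) : Prop :=
  match w with
  | [::] => True
  | t :: w' => effective S t /\ stepwise_effective (act S t) w'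
  end.

(* the medium axioms; tokens form a *set* of functions on states,
   so distinct tokens are distinct functions *)
Definition is_medium : Prop :=
  [/\ (forall t t' : Tok, (forall S, act S t = act S t') -> t = t'),
      (* (1) unique reverse *)
      (forall t, exists u, is_reverse t u /\ forall u', is_reverse t u' -> u' = u),
      (* (2) *)
      (forall S Q : St, S <> Q -> exists w, consistent w /\ apply_msg S w = Q),
      (* (3) *)
      (forall S w, stepwise_effective S w -> (apply_msg S w = S <-> vacuous w))
    & (* (4) *)
      (forall S Q w z, apply_msg S w = apply_msg Q z ->
         stepwise_effective S w -> stepwise_effective Q z ->
         consistent w -> consistent z -> consistent (w ++ z))].

Definition straight_path (S : St) (w : seq Tok) : Prop :=
  consistent w /\ stepwise_effective S w.

Definition content (Q : St) (t : Tok) : Prop :=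
  exists S w, [/\ straight_path S w, apply_msg S w = Q & t \in w].

Definition arcG (Q : St) (S S' : St) : Prop :=
  exists t, [/\ content Q t, act S t = S' & S' <> S].

Definition is_sinkG (Q : St) (S : St) : Prop := forall S', ~ arcG Q S S'.

End Medium.

From mathcomp Require Import all_boot.
Set Implicit Arguments. Unset Strict Implicit.

(* A token t of the content of Q fixes Q: otherwise its reverse u leads back
   from Q t to Q, and axiom (4) applied to a straight path to Q through t and
   to the one-token path [u] yields a consistent message containing both t and
   u.  Conversely, for S <> Q, axiom (2) gives a consistent message from S to
   Q; dropping its ineffective steps leaves a straight path, whose first token
   lies in the content of Q and moves S, so S is not a sink. *)

Section Messages.
Variables (St Tok : finType) (act : St -> Tok -> St).

Fixpoint drop_ineffective (S : St) (w : seq Tok) : seq Tok :=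
  match w with
  | [::] => [::]
  | t :: w' =>
      if act S t == S then drop_ineffective S w'
      else t :: drop_ineffective (act S t) w'
  end.

Lemma apply_msg_drop_ineffective S w :
  apply_msg act S (drop_ineffective S w) = apply_msg act S w.
Proof.
elim: w S => [|t w IHw] S //=.
by case: eqP => [fixS|_]; rewrite /= IHw // /apply_msg /= fixS.
Qed.

Lemma stepwise_effective_drop_ineffective S w :
  stepwise_effective act S (drop_ineffective S w).
Proof. by elim: w S => [|t w IHw] S //=; case: eqP. Qed.

Lemma drop_ineffective_subset S w : {subset drop_ineffective S w <= w}.
Proof.
elim: w S => [|t w IHw] S //= x; rewrite in_cons.
case: eqP => _; first by move/IHw->; rewrite orbT.
by rewrite in_cons => /orP[->|/IHw->]; rewrite ?orbT.
Qed.

Lemma consistent_sub w1 w2 :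
  {subset w1 <= w2} -> consistent act w2 -> consistent act w1.
Proof.
move=> sub12 cons2 [t [u [tu t1 u1]]]; apply: cons2.
by exists t, u; split; [|exact: sub12 t1|exact: sub12 u1].
Qed.

Lemma straight_path_drop_ineffective S w :
  consistent act w -> straight_path act S (drop_ineffective S w).
Proof.
move=> consw; split; last exact: stepwise_effective_drop_ineffective.
exact: consistent_sub (@drop_ineffective_subset S w) consw.
Qed.

Lemma is_reverse_sym t u : is_reverse act t u -> is_reverse act u t.
Proof. by move=> tu S Q neSQ; split => ?; apply/(tu Q S) => // eQS; apply: neSQ. Qed.

End Messages.

Section Medium.
Variables (St Tok : finType) (act : St -> Tok -> St).
Hypothesis medium : is_medium act.

Lemma reverse_unique t u u' :
  is_reverse act t u -> is_reverse act t u' -> u = u'.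
Proof.
case: medium => _ rev_uniq _ _ _ tu tu'.
by have [v [_ uniq_v]] := rev_uniq t; rewrite (uniq_v u tu) (uniq_v u' tu').
Qed.

(* With [u] its own reverse, every reverse pair (t', u') has t' = u iff
   u' = u, so [:: u] is vacuous and axiom (3) forbids it to move S. *)
Lemma effective_not_self_reverse S u : effective act S u -> ~ is_reverse act u u.
Proof.
move=> moveS uu; case: medium => _ _ _ loop _.
have effu : stepwise_effective act S [:: u] by split.
apply: moveS.
apply/(loop S [:: u] effu).
move=> t' u' t'u'; rewrite /= !addn0 !(eq_sym u).
have [et'|ne_t'u] := eqVneq t' u.
  by move: t'u'; rewrite et' => /(reverse_unique uu)->; rewrite eqxx.
suff ne_u'u : u' != u by rewrite (negbTE ne_u'u).
apply: contraNneq ne_t'u => eu'; move: t'u'; rewrite eu' => /is_reverse_sym ut'.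
by rewrite (reverse_unique uu ut').
Qed.

Lemma consistent1 S u : effective act S u -> consistent act [:: u].
Proof.
move=> moveS [a [b [ab]]]; rewrite !inE => /eqP ea /eqP eb; subst a b.
exact: (effective_not_self_reverse moveS).
Qed.

Lemma content_fixed Q t : content act Q t -> act Q t = Q.
Proof.
case: medium => _ rev_ex _ _ concat [S [w [[consw effw] SwQ tw]]].
case: (eqVneq (act Q t) Q) => // /eqP moveQ; exfalso.
set Q' := act Q t in moveQ.
have [u [tu _]] := rev_ex t.
have Q'uQ : act Q' u = Q by apply/(tu Q Q') => // eQ; apply: moveQ.
have moveQ' : effective act Q' u by rewrite /effective Q'uQ => eQ; apply: moveQ.
have ends : apply_msg act S w = apply_msg act Q' [:: u].
  by rewrite SwQ /apply_msg /= Q'uQ.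
have effu : stepwise_effective act Q' [:: u] by split.
apply: (concat S Q' w [:: u] ends effw effu consw (consistent1 moveQ')).
by exists t, u; rewrite !mem_cat tw mem_head orbT.
Qed.

Lemma exists_content_effective S Q :
  S <> Q -> exists t, content act Q t /\ effective act S t.
Proof.
case: medium => _ _ connected _ _ neSQ.
have [w [consw SwQ]] := connected S Q neSQ.
have straight := straight_path_drop_ineffective S consw.
have SvQ : apply_msg act S (drop_ineffective act S w) = Q.
  by rewrite apply_msg_drop_ineffective.
move: (drop_ineffective act S w) straight SvQ => [|t v] straight SvQ.
  by case: neSQ.
exists t; split; last by case: straight => _ [].
by exists S, (t :: v); rewrite mem_head.
Qed.

End Medium.

Theorem mainTheorem2 (St Tok : finType) (act : St -> Tok -> St)
  (Hmed : is_medium act) (Q : St) :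
  is_sinkG act Q Q /\ (forall S : St, is_sinkG act Q S -> S = Q).
Proof.
split.
- by move=> S' [t [Qt <-]]; rewrite (content_fixed Hmed Qt).
- move=> S sinkS; case: (eqVneq S Q) => // /eqP neSQ.
  have [t [Qt moveS]] := exists_content_effective Hmed neSQ.
  by case: (sinkS (act S t)); exists t.
Qed.
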